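(* Let $\pi$ be a probability distribution on $[K]^n$ ($K\ge2$). The Markov kernel $P_{\mathrm{R}}$ is $\pi$-reversible. Moreover, if $\pi(c)>0$ for every $c\in[K]^n$, then $P_{\mathrm{R}}$ is irreducible, aperiodic and uniformly ergodic.
   Context: Notation: $[K]=\{1,\dots,K\}$; $n_k(c)=\#\{i:c_i=k\}$; $(c_{-i},k)$ is $c$ with $c_i$ replaced by $k$; $\pi(c_i=k\mid c_{-i})=\pi((c_{-i},k))/\sum_j\pi((c_{-i},j))$. $\mathcal{K}=\{(k,k')\in[K]^2:k<k'\}$ and $p_c(k,k')=\frac{n_k(c)+n_{k'}(c)}{(K-1)n}$ for $(k,k')\in\mathcal K$. $r(c,i,k_-,k_+)=\frac{n_{k_-}(c)}{n_{k_+}(c)+1}\cdot\frac{\pi(c_i=k_+\mid c_{-i})}{\pi(c_i=k_-\mid c_{-i})}$. $P_{\mathrm{R}}$ is the kernel on $[K]^n$ that from $c$: samples $(k,k')\sim p_c$; sets $(k_-,k_+)=(k,k')$ or $(k',k)$ with probability $1/2$ each; if $n_{k_-}(c)=0$ stays at $c$; otherwise picks $i$ uniformly from $\{i':c_{i'}=k_-\}$ and moves to $(c_{-i},k_+)$ with probability $\min\{1,r(c,i,k_-,k_+)\}$, else stays at $c$. *)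

From HB Require Import structures.
From mathcomp Require Import all_boot all_order all_algebra.
Set Implicit Arguments. Unset Strict Implicit. Unset Printing Implicit Defensive.
Import Order.TTheory GRing.Theory Num.Theory.
Local Open Scope ring_scope.

(* State space [K]^n ; labels are 0..K-1 (i.e. 'I_K) instead of 1..K. *)
Definition cfg (n K : nat) := {ffun 'I_n -> 'I_K}.

Section Kernel.
Variables (R : realFieldType) (n K : nat).
Variable pi : cfg n K -> R.

Definition cnt (c : cfg n K) (k : 'I_K) : nat := #|[set i | c i == k]|.

Definition upd (c : cfg n K) (i : 'I_n) (k : 'I_K) : cfg n K :=
  [ffun j => if j == i then k else c j].

Definition condp (c : cfg n K) (i : 'I_n) (k : 'I_K) : R :=
  pi (upd c i k) / \sum_(j : 'I_K) pi (upd c i j).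

Definition pc (c : cfg n K) (k k' : 'I_K) : R :=
  (cnt c k + cnt c k')%:R / ((K - 1) * n)%:R.

Definition ratio (c : cfg n K) (i : 'I_n) (km kp : 'I_K) : R :=
  (cnt c km)%:R / (cnt c kp + 1)%:R * (condp c i kp / condp c i km).

Definition oriented_step (c : cfg n K) (km kp : 'I_K) (c' : cfg n K) : R :=
  if cnt c km == 0%N then (c' == c)%:R
  else (cnt c km)%:R^-1 *
       \sum_(i : 'I_n | c i == km)
         (Num.min 1 (ratio c i km kp) * (c' == upd c i kp)%:R
          + (1 - Num.min 1 (ratio c i km kp)) * (c' == c)%:R).

Definition PR (c c' : cfg n K) : R :=
  \sum_(k : 'I_K) \sum_(k' : 'I_K | (k < k')%N)
     pc c k k' * (2^-1 * oriented_step c k k' c' + 2^-1 * oriented_step c k' k c').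

End Kernel.

Section Chains.
Variables (R : realFieldType) (S : finType).

Fixpoint kpow (P : S -> S -> R) (t : nat) : S -> S -> R :=
  match t with
  | 0 => fun x y => (x == y)%:R
  | t'.+1 => fun x y => \sum_(z : S) kpow P t' x z * P z y
  end.

Definition is_prob (mu : S -> R) : Prop :=
  (forall x, 0 <= mu x) /\ \sum_(x : S) mu x = 1.

Definition reversible (P : S -> S -> R) (mu : S -> R) : Prop :=
  forall x y, mu x * P x y = mu y * P y x.

Definition irreducible (P : S -> S -> R) : Prop :=
  forall x y, exists t : nat, 0 < kpow P t x y.

(* period of x = gcd {t >= 1 : P^t(x,x) > 0}; aperiodic: every period is 1,
   i.e. no d >= 2 divides all return times. *)
Definition aperiodic (P : S -> S -> R) : Prop :=
  forall x (d : nat), (1 < d)%N ->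
    ~ (forall t : nat, (0 < t)%N -> 0 < kpow P t x x -> (d %| t)%N).

Definition tv (mu nu : S -> R) : R :=
  \big[Num.max/0]_(A : {set S}) `|\sum_(x in A) mu x - \sum_(x in A) nu x|.

Definition uniformly_ergodic (P : S -> S -> R) (mu : S -> R) : Prop :=
  exists (M rho : R), 0 <= rho /\ rho < 1 /\
    forall (x : S) (t : nat), tv (kpow P t x) mu <= M * rho ^+ t.

End Chains.

From Pilot Require Import Defs.
From HB Require Import structures.
From mathcomp Require Import all_boot all_order all_algebra.
From mathcomp Require Import ring lra zify.
Import Order.TTheory GRing.Theory Num.Theory.
Local Open Scope ring_scope.
Set Implicit Arguments. Unset Strict Implicit.

(* A move of P_R changes one site i from colour k to k' and is reached from c
   only through the oriented pair (k, k'); the reverse move uses (k', k) and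
   the same unordered pair, whose selection weight p_c(k, k') is unchanged by
   the move.  The counting factor n_k / (n_k' + 1) in r cancels the uniform
   choice of the site, so that pi(c) P_R(c, c') and pi(c') P_R(c', c) both
   equal p_c(k, k') / 2 * min (pi(c) / n_k(c), pi(c') / n_k'(c')): detailed
   balance.  When pi > 0, every single-site change has positive probability,
   so P_R is irreducible, and a constant configuration holds with positive
   probability (through a pair containing an absent colour).  A loop makes an
   irreducible finite kernel aperiodic and primitive, and a Doeblin
   minorisation of a strictly positive power gives geometric convergence in
   total variation. *)

Lemma sum_delta (R : nzSemiRingType) (T : finType) (x : T) :
  \sum_(y : T) ((y == x)%:R : R) = 1.
Proof. by rewrite (bigD1 x) //= eqxx big1 ?addr0 // => y /negbTE ->. Qed.

Lemma sum_pairs_sym (V : nmodType) (K : nat) (g : 'I_K -> 'I_K -> V) :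
  \sum_(k : 'I_K) \sum_(k' : 'I_K | (k < k')%N) (g k k' + g k' k)
  = \sum_(k : 'I_K) \sum_(k' : 'I_K | k' != k) g k k'.
Proof.
rewrite -(eq_bigr _ (fun k _ => esym (big_split _ _ _ _ _))) big_split /=.
rewrite [X in _ + X](exchange_big_dep xpredT) //= -big_split /=.
apply: eq_bigr => k _; rewrite [RHS](bigID (fun k' : 'I_K => (k < k')%N)) /=.
by congr (_ + _); apply: eq_bigl => k';
  rewrite -val_eqE /=; case: ltngtP => //= ->; rewrite eqxx.
Qed.

Lemma bernoulli_ineq (R : realFieldType) (m : nat) (x : R) :
  x <= 1 -> 1 - m%:R * x <= (1 - x) ^+ m.
Proof.
move=> x_le1; elim: m => [|m IH]; first by rewrite mul0r subr0 expr0.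
rewrite exprSr -natr1.
have : 0 <= m%:R * x ^+ 2 by rewrite mulr_ge0 ?sqr_ge0.
nra.
Qed.

Lemma min1_balance (R : realFieldType) (u v : R) :
  0 <= u -> 0 <= v -> u * Num.min 1 (v / u) = Num.min u v.
Proof.
move=> u_ge0 v_ge0; have [->|u_neq0] := eqVneq u 0.
  by rewrite mul0r; apply/esym/min_idPl.
by rewrite minr_pMr // mulr1 mulrCA divff // mulr1.
Qed.

(* Both sides equal [min (x / N) (y / M)]; [Z] is the common normalisation
   of the two conditional probabilities, and the identity also holds in the
   degenerate case [Z = 0] where Rocq's division returns [0]. *)
Lemma metropolis_balance (R : realFieldType) (x y Z N M : R) :
  0 <= x -> 0 <= y -> 0 < N -> 0 < M ->
  x * (N^-1 * Num.min 1 (N / M * ((y / Z) / (x / Z)))) =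
  y * (M^-1 * Num.min 1 (M / N * ((x / Z) / (y / Z)))).
Proof.
move=> x_ge0 y_ge0 N_gt0 M_gt0.
have [->|Z_neq0] := eqVneq Z 0.
  by rewrite invr0 !(mulr0, mul0r) (min_idPr ler01) !mulr0.
suff side u w L L' : 0 <= u -> 0 <= w -> 0 < L -> 0 < L' ->
    u * (L^-1 * Num.min 1 (L / L' * ((w / Z) / (u / Z)))) = Num.min (u / L) (w / L').
  by rewrite !side // minC.
move=> u_ge0 w_ge0 L_gt0 L'_gt0.
have -> : L / L' * ((w / Z) / (u / Z)) = (w / L') / (u / L).
  by rewrite !invfM !invrK [w / Z * _]mulrACA mulVf // mulr1; ring.
by rewrite mulrA min1_balance // divr_ge0 // ltW.
Qed.

Section FiniteChains.
Variables (R : realFieldType) (S : finType) (P : S -> S -> R).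

Lemma kpow1 x y : kpow P 1 x y = P x y.
Proof.
rewrite /= (bigD1 x) //= eqxx mul1r big1 ?addr0 // => z.
by rewrite eq_sym => /negbTE ->; rewrite mul0r.
Qed.

Lemma kpowD s t x y :
  kpow P (s + t) x y = \sum_z kpow P s x z * kpow P t z y.
Proof.
elim: t y => [|t IH] y.
  by rewrite addn0 /= (bigD1 y) //= eqxx mulr1 big1 ?addr0 // => z /negbTE ->;
    rewrite mulr0.
rewrite addnS /=; under eq_bigr => z _ do rewrite IH mulr_suml.
rewrite exchange_big /=; apply: eq_bigr => w _.
by rewrite mulr_sumr; apply: eq_bigr => z _; rewrite mulrA.
Qed.

Hypothesis P_ge0 : forall x y, 0 <= P x y.

Lemma kpow_ge0 t x y : 0 <= kpow P t x y.
Proof.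
elim: t x y => [|t IH] x y /=; first by case: (x == y).
by apply: sumr_ge0 => z _; apply: mulr_ge0.
Qed.

Lemma kpowD_gt0 s t x z y :
  0 < kpow P s x z -> 0 < kpow P t z y -> 0 < kpow P (s + t) x y.
Proof.
move=> hs ht; rewrite kpowD (bigD1 z) //= ltr_wpDr ?mulr_gt0 //.
by apply: sumr_ge0 => w _; rewrite mulr_ge0 ?kpow_ge0.
Qed.

Lemma aperiodic_of_loop z : irreducible P -> 0 < P z z -> aperiodic P.
Proof.
move=> irrP Pzz x d d_gt1 d_dvd.
have [a xz] := irrP x z; have [b zx] := irrP z x.
have loop1 : 0 < kpow P 1 z z by rewrite kpow1.
have ret1 := kpowD_gt0 (kpowD_gt0 xz loop1) zx.
have ret2 := kpowD_gt0 (kpowD_gt0 (kpowD_gt0 xz loop1) loop1) zx.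
have d1 : (d %| a + 1 + b)%N by apply: d_dvd ret1; lia.
have d2 : (d %| a + 1 + b + 1)%N by rewrite addnAC; apply: d_dvd ret2; lia.
by move: d2; rewrite dvdn_addr // dvdn1 => /eqP d_eq1; rewrite d_eq1 in d_gt1.
Qed.

Lemma primitive_of_loop z : irreducible P -> 0 < P z z ->
  exists T, (0 < T)%N /\ forall x y, 0 < kpow P T x y.
Proof.
move=> irrP Pzz.
have to_z x : exists t, [pred t | 0 < kpow P t x z] t by have [t] := irrP x z; exists t.
have from_z y : exists t, [pred t | 0 < kpow P t z y] t by have [t] := irrP z y; exists t.
pose A x := ex_minn (to_z x); pose B y := ex_minn (from_z y).
have hA x : 0 < kpow P (A x) x z by rewrite /A; case: ex_minnP.
have hB y : 0 < kpow P (B y) z y by rewrite /B; case: ex_minnP.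
have loops m : 0 < kpow P m.+1 z z.
  elim: m => [|m IH]; first by rewrite kpow1.
  by rewrite -addn1; apply: kpowD_gt0 IH _; rewrite kpow1.
pose TA := (\max_x A x)%N; pose TB := (\max_y B y)%N.
exists (TA + 1 + TB)%N; split=> [|x y]; first lia.
have Ax : (A x <= TA)%N by apply: leq_bigmax.
have By : (B y <= TB)%N by apply: leq_bigmax.
have -> : (TA + 1 + TB = A x + (TA - A x + TB - B y).+1 + B y)%N by lia.
exact: kpowD_gt0 (kpowD_gt0 (hA x) (loops _)) (hB y).
Qed.

Hypothesis P_sum : forall x, \sum_y P x y = 1.

Lemma kpow_sum t x : \sum_y kpow P t x y = 1.
Proof.
elim: t x => [|t IH] x /=.
  by under eq_bigr => y _ do rewrite eq_sym; exact: sum_delta.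
rewrite exchange_big /=.
by under eq_bigr => z _ do rewrite -mulr_sumr P_sum mulr1.
Qed.

Variable mu : S -> R.

Lemma reversible_stationary :
  reversible P mu -> forall y, \sum_x mu x * P x y = mu y.
Proof.
by move=> revP y; under eq_bigr => x _ do rewrite revP; rewrite -mulr_sumr P_sum mulr1.
Qed.

Hypothesis mu_prob : is_prob mu.
Hypothesis mu_stat : forall y, \sum_x mu x * P x y = mu y.

Lemma kpow_stationary t y : \sum_x mu x * kpow P t x y = mu y.
Proof.
elim: t y => [|t IH] y /=.
  by rewrite (bigD1 y) //= eqxx mulr1 big1 ?addr0 // => z /negbTE ->; rewrite mulr0.
under eq_bigr => x _ do rewrite mulr_sumr.
rewrite exchange_big /= -[RHS]mu_stat; apply: eq_bigr => z _.
by under eq_bigr => x _ do rewrite mulrA; rewrite -mulr_suml IH.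
Qed.

Definition l1_dist (f g : S -> R) := \sum_y `|f y - g y|.

Lemma tv_le_l1_dist f g : tv f g <= l1_dist f g.
Proof.
apply: bigmax_le => [|A _]; first by apply: sumr_ge0.
rewrite -sumrB; apply: le_trans (ler_norm_sum _ _ _) _.
by rewrite /l1_dist [leRHS](bigID (mem A)) /= ler_wpDr // sumr_ge0.
Qed.

Lemma l1_dist_kpow_le2 t x : l1_dist (kpow P t x) mu <= 2.
Proof.
case: mu_prob => mu_ge0 mu_sum.
apply: le_trans (_ : \sum_y (kpow P t x y + mu y) <= _).
  apply: ler_sum => y _; apply: le_trans (ler_normB _ _) _.
  by rewrite !ger0_norm ?kpow_ge0.
by rewrite big_split /= kpow_sum mu_sum.
Qed.

(* Doeblin: subtracting the common part [d * mu] of the rows of [Q] does not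
   change [f Q] when [f] has total mass zero. *)
Lemma doeblin_contraction (Q : S -> S -> R) (d : R) (f : S -> R) :
  (forall z y, d * mu y <= Q z y) -> (forall z, \sum_y Q z y = 1) ->
  \sum_z f z = 0 ->
  \sum_y `|\sum_z f z * Q z y| <= (1 - d) * \sum_z `|f z|.
Proof.
move=> Q_ge Q_sum f_sum.
have shift y : \sum_z f z * Q z y = \sum_z f z * (Q z y - d * mu y).
  under [RHS]eq_bigr => z _ do rewrite mulrBr.
  by rewrite sumrB -mulr_suml f_sum mul0r subr0.
under eq_bigr => y _ do rewrite shift.
apply: le_trans (_ : \sum_y \sum_z `|f z| * (Q z y - d * mu y) <= _).
  apply: ler_sum => y _; apply: le_trans (ler_norm_sum _ _ _) _.
  by apply: ler_sum => z _; rewrite normrM [`|_ - _|]ger0_norm ?subr_ge0.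
rewrite exchange_big /= mulr_sumr; apply: ler_sum => z _.
case: mu_prob => _ mu_sum.
by rewrite -mulr_sumr sumrB Q_sum -mulr_sumr mu_sum mulr1 mulrC.
Qed.

Lemma l1_dist_kpow_contract T d t x :
  (forall z y, d * mu y <= kpow P T z y) ->
  l1_dist (kpow P (t + T) x) mu <= (1 - d) * l1_dist (kpow P t x) mu.
Proof.
move=> minor; case: mu_prob => _ mu_sum.
have split_step y : kpow P (t + T) x y - mu y =
    \sum_z (kpow P t x z - mu z) * kpow P T z y.
  under [RHS]eq_bigr => z _ do rewrite mulrBl.
  by rewrite sumrB kpowD kpow_stationary.
rewrite /l1_dist; under eq_bigr => y _ do rewrite split_step.
apply: doeblin_contraction => // [z|]; first exact: kpow_sum.
by rewrite sumrB kpow_sum mu_sum subrr.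
Qed.

Lemma l1_dist_kpow_geometric T d q r x :
  d <= 1 -> (forall z y, d * mu y <= kpow P T z y) ->
  l1_dist (kpow P (q * T + r) x) mu <= 2 * (1 - d) ^+ q.
Proof.
move=> d_le1 minor; elim: q => [|q IH]; first by rewrite expr0 mulr1 l1_dist_kpow_le2.
rewrite (_ : q.+1 * T + r = q * T + r + T)%N; last by rewrite mulSn; lia.
apply: le_trans (l1_dist_kpow_contract _ _ minor) _.
by rewrite exprS mulrCA ler_wpM2l // subr_ge0.
Qed.

Lemma uniformly_ergodic_of_minorization T d :
  (0 < T)%N -> 0 < d -> d < 1 -> (forall z y, d * mu y <= kpow P T z y) ->
  uniformly_ergodic P mu.
Proof.
move=> T_gt0 d_gt0 d_lt1 minor.
have TR_gt0 : 0 < T%:R :> R by rewrite ltr0n.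
have dT_gt0 : 0 < d / T%:R by rewrite divr_gt0.
have dT_le_d : d / T%:R <= d by rewrite ler_pdivrMr // ler_peMr ?ler1n // ltW.
(* Bernoulli's inequality turns the contraction [1 - d] per block of [T]
   steps into the per-step rate [rho]. *)
pose rho := 1 - d / T%:R.
have rho_gt0 : 0 < rho by rewrite /rho; lra.
have rho_le1 : rho <= 1 by rewrite /rho; lra.
have rhoT : 1 - d <= rho ^+ T.
  have := bernoulli_ineq T (ltac:(lra) : d / T%:R <= 1).
  by rewrite mulrCA divff ?gt_eqF // mulr1.
exists (2 / rho ^+ T), rho; split; first exact: ltW.
split=> [|x t]; first by rewrite /rho; lra.
apply: le_trans (tv_le_l1_dist _ _) _.
rewrite {1}(divn_eq t T).
apply: le_trans (l1_dist_kpow_geometric _ _ _ (ltW d_lt1) minor) _.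
apply: le_trans (_ : 2 * rho ^+ (T * (t %/ T)) <= _).
  rewrite ler_wpM2l // exprM; apply: lerXn2r => //; rewrite nnegrE; lra.
rewrite mulrAC -mulrA ler_wpM2l // ler_pdivlMr ?exprn_gt0 // -exprD.
apply: ler_wiXn2l; rewrite ?(ltW rho_gt0) //.
by rewrite {1}(divn_eq t T) mulnC leq_add2l ltnW // ltn_mod.
Qed.

Lemma uniformly_ergodic_of_primitive :
  (exists T, (0 < T)%N /\ forall x y, 0 < kpow P T x y) -> uniformly_ergodic P mu.
Proof.
case=> T [T_gt0 kpowT_gt0].
pose d := \big[Num.min/2^-1]_(p : S * S) kpow P T p.1 p.2.
have d_gt0 : 0 < d by apply: lt_bigmin => [|p _]; rewrite ?invr_gt0.
have d_le_half : d <= 2^-1 by apply: bigmin_le_id.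
have d_lt1 : d < 1 by lra.
apply: (uniformly_ergodic_of_minorization T_gt0 d_gt0 d_lt1) => z y.
have mu_le1 : mu y <= 1.
  case: mu_prob => mu_ge0 <-; rewrite (bigD1 y) //= ler_wpDr //.
  exact: sumr_ge0.
have : d <= kpow P T z y by apply: (bigmin_le _ (z, y)).
case: mu_prob => mu_ge0 _; have := mu_ge0 y; nra.
Qed.

End FiniteChains.

Section Configurations.
Variables n K : nat.
Implicit Types (c : cfg n K) (i : 'I_n) (k : 'I_K).

Lemma updE c i k j : upd c i k j = if j == i then k else c j.
Proof. by rewrite ffunE. Qed.

Lemma upd_same c i k : upd c i k i = k.
Proof. by rewrite updE eqxx. Qed.

Lemma upd_id c i : upd c i (c i) = c.
Proof. by apply/ffunP => j; rewrite updE; case: eqP => // ->. Qed.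

Lemma upd_upd c i k k' : upd (upd c i k) i k' = upd c i k'.
Proof. by apply/ffunP => j; rewrite !updE; case: eqP. Qed.

Lemma upd_neq c i k : c i != k -> upd c i k != c.
Proof. by apply: contra => /eqP <-; rewrite upd_same. Qed.

Lemma upd_neq_site c i i' k : c i' != k -> i' != i -> upd c i k != upd c i' k.
Proof.
move=> ci'k i'i; apply: contra ci'k => /eqP/ffunP/(_ i').
by rewrite upd_same updE (negbTE i'i) => ->.
Qed.

Lemma cnt_gt0 c i : (0 < cnt c (c i))%N.
Proof. by rewrite card_gt0; apply/set0Pn; exists i; rewrite inE. Qed.

Lemma cnt_sum c : (\sum_k cnt c k = n)%N.
Proof.
under eq_bigr => k _ do rewrite /cnt -sum1_card.
rewrite (exchange_big_dep xpredT) //= -[RHS](card_ord n) -sum1_card.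
apply: eq_bigr => i _; rewrite (bigD1 (c i)) ?inE //= big1 // => k.
by rewrite inE => /andP[/eqP -> /negbTE]; rewrite eqxx.
Qed.

Lemma cnt_indicator c k : cnt c k = (\sum_j (c j == k))%N.
Proof.
by rewrite /cnt -sum1_card big_mkcond; apply: eq_bigr => j _; rewrite inE; case: eqP.
Qed.

Lemma cnt_upd c i k' k :
  (cnt (upd c i k') k + (c i == k) = cnt c k + (k' == k))%N.
Proof.
rewrite !cnt_indicator (bigD1 i) //= [in RHS](bigD1 i) //= upd_same.
under eq_bigr => j ji do rewrite updE (negbTE ji).
lia.
Qed.

Lemma cnt_upd_old c i k : c i != k -> (cnt (upd c i k) (c i)).+1 = cnt c (c i).
Proof. by move=> cik; have := cnt_upd c i k (c i); rewrite eqxx eq_sym (negbTE cik); lia. Qed.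

Lemma cnt_upd_new c i k : c i != k -> cnt (upd c i k) k = (cnt c k).+1.
Proof. by move=> cik; have := cnt_upd c i k k; rewrite eqxx (negbTE cik); lia. Qed.

End Configurations.

Section Kernel.
Variables (R : realFieldType) (n K : nat) (pi : cfg n K -> R).
Hypothesis pi_ge0 : forall c, 0 <= pi c.
Implicit Types (c : cfg n K) (i : 'I_n) (k : 'I_K).

Lemma pcC c k k' : pc R c k k' = pc R c k' k.
Proof. by rewrite /pc addnC. Qed.

Lemma pc_ge0 c k k' : 0 <= pc R c k k'.
Proof. by rewrite divr_ge0. Qed.

Lemma acceptance_ge0 c i k k' : 0 <= Num.min 1 (Defs.ratio pi c i k k').
Proof.
have condp_ge0 k'' : 0 <= condp pi c i k'' by rewrite divr_ge0 // sumr_ge0.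
rewrite le_min ler01 /=; apply: mulr_ge0; apply: divr_ge0; rewrite ?ler0n //.
Qed.

Lemma oriented_step_ge0 c k k' c' : 0 <= oriented_step pi c k k' c'.
Proof.
rewrite /oriented_step; case: ifP => // _.
rewrite mulr_ge0 ?invr_ge0 // sumr_ge0 // => i _.
by rewrite addr_ge0 ?mulr_ge0 ?acceptance_ge0 // subr_ge0 ge_min lexx.
Qed.

Lemma PR_ge0 c c' : 0 <= PR pi c c'.
Proof.
by rewrite !sumr_ge0 // => k _; rewrite sumr_ge0 // => k' _;
  rewrite mulr_ge0 ?pc_ge0 // addr_ge0 // mulr_ge0 ?invr_ge0 ?oriented_step_ge0.
Qed.

Lemma oriented_step_sum c k k' : \sum_c' oriented_step pi c k k' c' = 1.
Proof.
rewrite /oriented_step; case: eqP => [_|/eqP cnt_neq0]; first exact: sum_delta.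
rewrite -mulr_sumr exchange_big /=.
under eq_bigr => i _ do
  rewrite big_split /= -!mulr_sumr !sum_delta !mulr1 addrC subrK.
rewrite (_ : \sum_(i | c i == k) 1 = (cnt c k)%:R) ?mulVf ?pnatr_eq0 //.
by rewrite /cnt -sumr_const; apply: eq_bigl => i; rewrite inE.
Qed.

Lemma PR_offdiag c c' :
  PR pi c c' = \sum_k \sum_(k' | k' != k) 2^-1 * (pc R c k k' * oriented_step pi c k k' c').
Proof.
rewrite -sum_pairs_sym; apply: eq_bigr => k _; apply: eq_bigr => k' _.
by rewrite [pc R c k' k]pcC; ring.
Qed.

Lemma PR_ge_oriented c c' k k' :
  k != k' -> 2^-1 * (pc R c k k' * oriented_step pi c k k' c') <= PR pi c c'.
Proof.
move=> kk'; rewrite PR_offdiag (bigD1 k) //= (bigD1 k') 1?eq_sym //=.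
have term_ge0 a b : 0 <= 2^-1 * (pc R c a b * oriented_step pi c a b c').
  by rewrite !mulr_ge0 ?invr_ge0 ?pc_ge0 ?oriented_step_ge0.
by rewrite -addrA lerDl addr_ge0 // !sumr_ge0 // => a _; rewrite sumr_ge0.
Qed.

Lemma oriented_step_upd c i k :
  c i != k ->
  oriented_step pi c (c i) k (upd c i k) =
  (cnt c (c i))%:R^-1 * Num.min 1 (Defs.ratio pi c i (c i) k).
Proof.
move=> cik; rewrite /oriented_step eqn0Ngt cnt_gt0 /=; congr (_ * _).
rewrite (bigD1 i) //= eqxx (negbTE (upd_neq cik)) mulr1 mulr0 addr0 big1 ?addr0 //.
move=> j /andP[/eqP cj ji]; rewrite (negbTE (upd_neq_site _ ji)) ?cj //.
by rewrite !mulr0 addr0.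
Qed.

Lemma oriented_step_eq0 c c' k k' :
  c' != c -> (forall i, c i = k -> c' != upd c i k') ->
  oriented_step pi c k k' c' = 0.
Proof.
move=> c'c unreach; rewrite /oriented_step (negbTE c'c); case: ifP => // _.
by rewrite big1 ?mulr0 // => i /eqP/unreach/negbTE ->; rewrite !mulr0 addr0.
Qed.

Lemma pc_upd c i k : pc R (upd c i k) (c i) k = pc R c (c i) k.
Proof.
have [<-|cik] := eqVneq (c i) k; first by rewrite upd_id.
by rewrite /pc -(cnt_upd_old cik) cnt_upd_new // addSnnS.
Qed.

(* A move [c -> c'] changing site [i] from [k] to [k'] is undone by the move
   [c' -> c] of the oriented pair [(k', k)]; all other terms vanish. *)
Lemma oriented_balance c c' k k' :
  c != c' ->
  pi c * (pc R c k k' * oriented_step pi c k k' c') =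
  pi c' * (pc R c' k k' * oriented_step pi c' k' k c).
Proof.
move=> cc'.
case: (pickP (fun i => (c i == k) && (c' == upd c i k'))) => [i|unreach]; last first.
  rewrite (oriented_step_eq0 _ (c := c)) 1?eq_sym // => [|i cik]; last first.
    by apply/negP => /eqP c'E; have := unreach i; rewrite cik c'E !eqxx.
  rewrite oriented_step_eq0 ?mulr0 // => j c'j; apply/negP => /eqP cE.
  by have := unreach j; rewrite cE upd_same eqxx upd_upd -c'j upd_id eqxx.
case/andP=> /eqP <- /eqP c'E; subst c'.
have cik' : c i != k' by apply: contra cc' => /eqP <-; rewrite upd_id.
have c'ik : upd c i k' i != c i by rewrite upd_same eq_sym.
rewrite pc_upd oriented_step_upd //.
move: (oriented_step_upd c'ik); rewrite upd_same upd_upd upd_id => ->.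
rewrite /Defs.ratio /condp !upd_upd upd_id !addn1 cnt_upd_new // cnt_upd_old //.
have sumE : \sum_j pi (upd (upd c i k') i j) = \sum_j pi (upd c i j).
  by apply: eq_bigr => j _; rewrite upd_upd.
rewrite sumE mulrCA [RHS]mulrCA; congr (_ * _).
by rewrite metropolis_balance // ltr0n cnt_gt0.
Qed.

Lemma PR_reversible : reversible (PR pi) pi.
Proof.
move=> c c'; have [<-|cc'] := eqVneq c c'; first by [].
rewrite !PR_offdiag !mulr_sumr.
under eq_bigr => k _ do (rewrite mulr_sumr; under eq_bigr => k' _ do
  rewrite mulrCA oriented_balance // pcC).
rewrite (exchange_big_dep xpredT) //=; apply: eq_bigr => k _.
rewrite mulr_sumr; apply: eq_big => [k'|k' _]; first by rewrite eq_sym.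
by rewrite mulrCA.
Qed.

Hypotheses (K_ge2 : (2 <= K)%N) (n_ge1 : (1 <= n)%N).

Lemma pc_gt0 c k k' : (0 < cnt c k)%N -> 0 < pc R c k k'.
Proof. by move=> cnt_k_gt0; rewrite divr_gt0 // ltr0n ?muln_gt0; lia. Qed.

Lemma pc_sum c : \sum_(k : 'I_K) \sum_(k' : 'I_K | (k < k')%N) pc R c k k' = 1.
Proof.
rewrite /pc; under eq_bigr => k _ do rewrite -mulr_suml.
rewrite -mulr_suml.
suff -> : \sum_(k : 'I_K) \sum_(k' : 'I_K | (k < k')%N) ((cnt c k + cnt c k')%:R : R)
          = ((K - 1) * n)%:R.
  by rewrite divff // pnatr_eq0 -lt0n muln_gt0; apply/andP; split; lia.
under eq_bigr => k _ do under eq_bigr => k' _ do rewrite natrD.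
rewrite sum_pairs_sym -[in RHS](cnt_sum c) natrM natr_sum mulr_sumr.
apply: eq_bigr => k _; rewrite sumr_const [RHS]mulr_natl; congr (_ *+ _).
by rewrite subn1 -[X in X.-1]card_ord -(cardC1 k); apply: eq_card.
Qed.

Lemma PR_sum c : \sum_c' PR pi c c' = 1.
Proof.
rewrite /PR exchange_big /= -[RHS](pc_sum c); apply: eq_bigr => k _.
rewrite exchange_big /=; apply: eq_bigr => k' _.
rewrite -mulr_sumr big_split /= -!mulr_sumr !oriented_step_sum !mulr1.
by rewrite (_ : 2^-1 + 2^-1 = 1 :> R) ?mulr1 //; field.
Qed.

Lemma PR_loop : exists z, 0 < PR pi z z.
Proof.
pose k0 : 'I_K := Ordinal (ltnW K_ge2); pose k1 : 'I_K := Ordinal K_ge2.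
pose c0 : cfg n K := [ffun => k0].
have cnt_k1 : cnt c0 k1 = 0%N.
  by apply/eqP; rewrite cards_eq0; apply/eqP/setP => j; rewrite !inE ffunE.
have cnt_k0 : (0 < cnt c0 k0)%N by have := cnt_gt0 c0 (Ordinal n_ge1); rewrite ffunE.
have k1k0 : k1 != k0 by rewrite -val_eqE.
exists c0; apply: lt_le_trans (PR_ge_oriented _ _ k1k0).
by rewrite /oriented_step cnt_k1 /= eqxx mulr1 pcC mulr_gt0 ?invr_gt0 ?ltr0n ?pc_gt0.
Qed.

Hypothesis pi_gt0 : forall c, 0 < pi c.

Lemma PR_upd_gt0 c i k : c i != k -> 0 < PR pi c (upd c i k).
Proof.
move=> cik; apply: lt_le_trans (PR_ge_oriented _ _ cik).
have condp_gt0 k' : 0 < condp pi c i k'.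
  by rewrite divr_gt0 // (bigD1 k') //= ltr_wpDr // sumr_ge0 // => j _; apply: ltW.
rewrite oriented_step_upd //; apply: mulr_gt0; first by rewrite invr_gt0 ltr0n.
apply: mulr_gt0; first exact: pc_gt0 (cnt_gt0 c i).
apply: mulr_gt0; first by rewrite invr_gt0 ltr0n cnt_gt0.
by rewrite lt_min ltr01 /= mulr_gt0 // divr_gt0 // ltr0n ?cnt_gt0 ?addn1.
Qed.

Lemma PR_irreducible : irreducible (PR pi).
Proof.
move=> x y.
pose mix m : cfg n K := [ffun j : 'I_n => if (j < m)%N then y j else x j].
suff reach_mix m : (m <= n)%N -> exists t, 0 < kpow (PR pi) t x (mix m).
  have mix_n : mix n = y by apply/ffunP => j; rewrite ffunE ltn_ord.
  by rewrite -mix_n; apply: reach_mix.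
elim: m => [|m IH] m_le.
  have mix0 : mix 0%N = x by apply/ffunP => j; rewrite ffunE.
  by exists 0%N; rewrite mix0 /= eqxx ltr01.
have [t x_mix] := IH (ltnW m_le); pose j0 : 'I_n := Ordinal m_le.
have mixS : mix m.+1 = upd (mix m) j0 (y j0).
  apply/ffunP => j; rewrite updE !ffunE -val_eqE /= ltnS leq_eqVlt.
  by case: eqP => //= jm; congr (y _); apply: val_inj.
have [same|diff] := eqVneq (mix m j0) (y j0).
  by exists t; rewrite mixS -same upd_id.
exists t.+1; rewrite -addn1; apply: kpowD_gt0 x_mix _.
  exact: PR_ge0.
by rewrite kpow1 mixS; apply: PR_upd_gt0.
Qed.

End Kernel.

Unset Implicit Arguments.
Theorem lemma1 (R : realFieldType) (n K : nat) (pi : cfg n K -> R) :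
  (2 <= K)%N -> (1 <= n)%N -> is_prob pi ->
  reversible (PR pi) pi /\
  ((forall c, 0 < pi c) ->
     [/\ irreducible (PR pi), aperiodic (PR pi) & uniformly_ergodic (PR pi) pi]).
Proof.
move=> K_ge2 n_ge1 pi_prob; have pi_ge0 : forall c, 0 <= pi c by case: pi_prob.
have PR_rev := PR_reversible pi_ge0.
split=> // pi_gt0.
have PR_irr := PR_irreducible pi_ge0 K_ge2 n_ge1 pi_gt0.
have [z Pzz] := PR_loop pi_ge0 K_ge2 n_ge1.
have P_ge0 := PR_ge0 pi_ge0; have P_sum := PR_sum pi K_ge2 n_ge1.
split; first exact: PR_irr.
- exact: aperiodic_of_loop P_ge0 z PR_irr Pzz.
- apply: (uniformly_ergodic_of_primitive P_ge0 P_sum pi_prob).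
    exact: (reversible_stationary P_sum PR_rev).
  exact: primitive_of_loop P_ge0 z PR_irr Pzz.
Qed.
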